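(* Let $\xi,\eta,\zeta\colon\mathbb{R}\times(-\infty,\infty]\to\mathbb{R}$ be multiplicity functions, each with finite support avoiding the diagonal $\Delta=\{(x_1,x_2):x_1=x_2\}$. Then: (positivity) $W_1^{\pm}(\xi,\eta)\ge0$, and $W_1^{\pm}(\xi,\eta)>0$ if and only if $\xi\ne\eta$; (symmetry) $W_1^{\pm}(\xi,\eta)=W_1^{\pm}(\eta,\xi)$; (triangle inequality) $W_1^{\pm}(\xi,\eta)+W_1^{\pm}(\eta,\zeta)\ge W_1^{\pm}(\xi,\zeta)$.
   Context: The support of $f$ is the set of points where $f\ne0$. For $x=(x_1,x_2),y=(y_1,y_2)\in\mathbb{R}\times(-\infty,\infty]$ let $\|x-y\|_1=|x_1-y_1|+|x_2-y_2|$ (with $|\infty-\infty|=0$ and $|\infty-a|=\infty$ for real $a$) and $\delta(x)=|x_2-x_1|$. For non-negative $\xi,\eta$ with finite supports, the $1$-Wasserstein distance is $W_1(\xi,\eta)=\inf_{T,X,Y}\big[\sum_{x,y}T(x,y)\|x-y\|_1+\sum_xX(x)\delta(x)+\sum_yY(y)\delta(y)\big]$ over $T\colon\mathrm{supp}\,\xi\times\mathrm{supp}\,\eta\to[0,\infty)$, $X\colon\mathrm{supp}\,\xi\to[0,\infty)$, $Y\colon\mathrm{supp}\,\eta\to[0,\infty)$ with $X(x)+\sum_{y}T(x,y)=\xi(x)$ and $Y(y)+\sum_xT(x,y)=\eta(y)$ for all $x\in\mathrm{supp}\,\xi$, $y\in\mathrm{supp}\,\eta$. For arbitrary $\xi=\xi^+-\xi^-$,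 $\eta=\eta^+-\eta^-$ with $\xi^\pm,\eta^\pm$ non-negative, the alternating $1$-Wasserstein distance is $W_1^{\pm}(\xi,\eta)=W_1(\xi^++\eta^-,\xi^-+\eta^+)$ (independent of the decomposition). Values $\infty$ are allowed (extended metric). *)

From HB Require Import structures.
From mathcomp Require Import all_boot all_order all_algebra.
From mathcomp Require Import all_classical all_reals.
From mathcomp Require Import ereal.
Set Implicit Arguments. Unset Strict Implicit. Unset Printing Implicit Defensive.
Import Order.TTheory GRing.Theory Num.Theory.
Local Open Scope classical_set_scope.
Local Open Scope ring_scope.

(* Points of R x (-oo, +oo] are encoded as elements of R * \bar R; the value
   -oo of the second coordinate is excluded by hypothesis on the supports. *)
Definition pt (R : realType) := (R * \bar R)%type.

Definition supp (R : realType) (f : pt R -> R) : set (pt R) := [set x | f x != 0].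

Definition dist1 (R : realType) (x y : pt R) : \bar R :=
  (`|x.1 - y.1|%:E + match x.2, y.2 with
                      | +oo%E, +oo%E => 0
                      | EFin a, EFin b => `|a - b|%:E
                      | _, _ => +oo
                      end)%E.

Definition delta (R : realType) (x : pt R) : \bar R := `|(x.2 - x.1%:E)%E|%E.

Definition feasible (R : realType) (xi eta : pt R -> R)
    (T : pt R -> pt R -> R) (X Y : pt R -> R) : Prop :=
  (forall x y, x \in supp xi -> y \in supp eta -> 0 <= T x y) /\
  (forall x, x \in supp xi -> 0 <= X x) /\
  (forall y, y \in supp eta -> 0 <= Y y) /\
  (forall x, x \in supp xi -> X x + \sum_(y \in supp eta) T x y = xi x) /\
  (forall y, y \in supp eta -> Y y + \sum_(x \in supp xi) T x y = eta y).

Definition cost (R : realType) (xi eta : pt R -> R)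
    (T : pt R -> pt R -> R) (X Y : pt R -> R) : \bar R :=
  (\sum_(x \in supp xi) \sum_(y \in supp eta) ((T x y)%:E * dist1 x y)
   + \sum_(x \in supp xi) ((X x)%:E * delta x)
   + \sum_(y \in supp eta) ((Y y)%:E * delta y))%E.

Definition W1 (R : realType) (xi eta : pt R -> R) : \bar R :=
  ereal_inf [set c | exists T X Y, feasible xi eta T X Y /\ c = cost xi eta T X Y].

Definition posp (R : realType) (f : pt R -> R) : pt R -> R := fun x => Num.max (f x) 0.
Definition negp (R : realType) (f : pt R -> R) : pt R -> R := fun x => Num.max (- f x) 0.

Definition W1pm (R : realType) (xi eta : pt R -> R) : \bar R :=
  W1 (fun x => posp xi x + negp eta x) (fun x => negp xi x + posp eta x).

Definition admissible (R : realType) (f : pt R -> R) : Prop :=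
  finite_set (supp f) /\
  (forall x, f x != 0 -> x.2 != -oo%E /\ x.2 != x.1%:E).

From HB Require Import structures.
From mathcomp Require Import all_boot all_order all_algebra.
From mathcomp Require Import all_classical all_reals.
From mathcomp Require Import ereal.
From mathcomp Require Import finmap ring lra.
Set Implicit Arguments. Unset Strict Implicit. Unset Printing Implicit Defensive.
Import Order.TTheory GRing.Theory Num.Theory.
Local Open Scope ring_scope.

(* Fix a finite set of points containing all supports and add one node for the
   diagonal; edges cost the distance ||x - y||_1 between two points and delta
   between a point and the diagonal.  A feasible plan for
   W1(xi^+ + eta^-, xi^- + eta^+) is then a nonnegative flow on this graph whose
   net outflow at every point is xi - eta, with the same cost.  Conversely, the
   edge costs satisfy the triangle inequality through every point, so a point
   that both receives and emits mass can be bypassed without raising the cost;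
   once no such point is left the flow is a plan.  Hence W1pm xi eta is the
   infimum of the costs of flows with net outflow xi - eta: reversing flows
   gives symmetry, adding them the triangle inequality, and the zero flow
   W1pm xi xi = 0.  Finally a point p with xi p <> eta p must emit or absorb
   |xi p - eta p| along edges whose cost is at least the positive distance from
   p to every other node. *)

Lemma big_option (V : Type) (idx : V) (op : Monoid.com_law idx) (T : finType)
    (f : option T -> V) :
  \big[op/idx]_(u : option T) f u = op (f None) (\big[op/idx]_(x : T) f (Some x)).
Proof.
rewrite (bigD1 None) //=; congr (op _ _).
rewrite (reindex_omap (@Some T) id) //=; last by case.
by apply: eq_bigl => x; rewrite /= ?eqxx.
Qed.

Lemma inv_max_scale (R : realType) (a b : R) : 0 <= a -> 0 <= b ->
  let p := (Num.max a b)^-1 in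
  [/\ 0 <= p, p * a <= 1, p * b <= 1 & a * (1 - p * b) = 0 \/ b * (1 - p * a) = 0].
Proof.
move=> a0 b0 p; have [ab|ba] := leP a b.
- rewrite /p (max_idPr ab); have [->|b_neq0] := eqVneq b 0.
    by rewrite invr0 !mul0r; split => //; right.
  have b_gt0 : 0 < b by rewrite lt_def b_neq0.
  split; [by rewrite invr_ge0| |by rewrite mulVf|by left; rewrite mulVf // subrr mulr0].
  by rewrite mulrC ler_pdivrMr // mul1r.
- have a_gt0 : 0 < a by apply: le_lt_trans ba.
  rewrite /p (max_idPl (ltW ba)); split; [by rewrite invr_ge0 ltW|by rewrite mulVf ?gt_eqF| |].
  + by rewrite mulrC ler_pdivrMr // mul1r ltW.
  + by right; rewrite mulVf ?gt_eqF // subrr mulr0.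
Qed.

Lemma ge0_sumEFinM_distrl (R : realType) (I : finType) (P : pred I) (k : R)
    (f : I -> R) (x : \bar R) :
  0 <= k -> (forall i, P i -> 0 <= f i) ->
  (\sum_(i | P i) (k * f i)%:E * x = (k * \sum_(i | P i) f i)%:E * x)%E.
Proof.
move=> k0 f0; rewrite -ge0_sume_distrl; last by move=> i Pi; rewrite lee_fin mulr_ge0 ?f0.
by rewrite sumEFin mulr_sumr.
Qed.

Section Flows.
Variables (R : realType) (N : finType) (c : N -> N -> \bar R).
Hypothesis c_ge0 : forall u v, (0 <= c u v)%E.

Definition flow_ge0 (F : N -> N -> R) := forall u v, 0 <= F u v.
Definition outflow (F : N -> N -> R) u := \sum_v F u v.
Definition inflow (F : N -> N -> R) u := \sum_v F v u.
Definition flow_cost (F : N -> N -> R) : \bar R := (\sum_u \sum_v (F u v)%:E * c u v)%E.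

Lemma flow_cost_ge0 F : flow_ge0 F -> (0 <= flow_cost F)%E.
Proof.
move=> F0; apply: sume_ge0 => u _; apply: sume_ge0 => v _.
by rewrite mule_ge0 ?lee_fin.
Qed.

Lemma flow_costD F1 F2 : flow_ge0 F1 -> flow_ge0 F2 ->
  flow_cost (fun u v => F1 u v + F2 u v) = (flow_cost F1 + flow_cost F2)%E.
Proof.
move=> F10 F20; rewrite /flow_cost -big_split; apply: eq_bigr => u _.
rewrite -big_split; apply: eq_bigr => v _.
by rewrite EFinD ge0_muleDl ?lee_fin.
Qed.

Lemma flow_cost_split_at r F : flow_cost F =
  ((F r r)%:E * c r r + \sum_(v | v != r) (F r v)%:E * c r v +
   \sum_(u | u != r) ((F u r)%:E * c u r + \sum_(v | v != r) (F u v)%:E * c u v))%E.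
Proof.
rewrite /flow_cost (bigD1 r) //= (bigD1 r) //=; congr (_ + _)%E.
by apply: eq_bigr => u _; rewrite (bigD1 r).
Qed.

Definition min_exit_cost u := \big[Order.min/+oo%E]_(v | v != u) c u v.

Lemma flow_cost_excess_lb F u : flow_ge0 F ->
  ((outflow F u - inflow F u)%:E * min_exit_cost u <= flow_cost F)%E.
Proof.
move=> F0; have m0 : (0 <= min_exit_cost u)%E by apply/bigmin_geP; split.
have [excess_le0|excess_gt0] := leP (outflow F u - inflow F u) 0.
  apply: le_trans (flow_cost_ge0 F0).
  by apply: mule_le0_ge0; rewrite ?lee_fin.
have out_le : outflow F u - inflow F u <= \sum_(v | v != u) F u v.
  rewrite /outflow /inflow (bigD1 u) //= [X in _ - X](bigD1 u) //=.
  rewrite lerBlDr addrC lerD2l lerDl.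
  by apply: sumr_ge0.
apply: (@le_trans _ _ (\sum_(v | v != u) (F u v)%:E * c u v)%E).
  apply: (@le_trans _ _ (\sum_(v | v != u) (F u v)%:E * min_exit_cost u)%E).
    by rewrite -ge0_sume_distrl ?sumEFin ?lee_wpmul2r ?lee_fin // => v _; rewrite lee_fin.
  apply: lee_sum => v vu; rewrite lee_wpmul2l ?lee_fin //.
  exact: bigmin_le_cond.
rewrite (flow_cost_split_at u) addeAC; apply: leeDr.
rewrite adde_ge0 ?mule_ge0 ?lee_fin //; apply: sume_ge0 => v _.
by rewrite adde_ge0 ?mule_ge0 ?lee_fin //; apply: sume_ge0 => w _; rewrite mule_ge0 ?lee_fin.
Qed.

Hypothesis c_sym : forall u v, c u v = c v u.

Lemma flow_cost_tr F : flow_cost (fun u v => F v u) = flow_cost F.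
Proof.
rewrite /flow_cost exchange_big; apply: eq_bigr => u _; apply: eq_bigr => v _.
by rewrite c_sym.
Qed.

Lemma flow_cost_abs_excess_lb F u : flow_ge0 F ->
  (`|outflow F u - inflow F u|%:E * min_exit_cost u <= flow_cost F)%E.
Proof.
move=> F0; have [excess_ge0|excess_lt0] := leP 0 (outflow F u - inflow F u).
  by rewrite ger0_norm //; apply: flow_cost_excess_lb.
rewrite ltr0_norm // opprB -flow_cost_tr.
exact: (@flow_cost_excess_lb (fun u v => F v u)).
Qed.

End Flows.

Section FlowReduction.
Variables (R : realType) (N : finType) (D : N) (c : N -> N -> \bar R).
Hypothesis c_ge0 : forall u v, (0 <= c u v)%E.
Hypothesis c_triangle : forall u v r, r != D -> (c u v <= c u r + c r v)%E.

Definition transit (F : N -> N -> R) :=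
  [set u | (u != D) && (0 < outflow F u) && (0 < inflow F u)].

Section Bypass.
Variables (F : N -> N -> R) (r : N).
Hypothesis F_ge0 : flow_ge0 F.

Let In := \sum_(u | u != r) F u r.
Let Out := \sum_(v | v != r) F r v.
Let p := (Num.max In Out)^-1.

(* A share [p] of each two-step path [u -> r -> v] is rerouted along [u -> v];
   with [p = 1 / max(In, Out)] this exhausts either the mass entering [r] or
   the mass leaving it. *)
Let G u v := if u == r then (if v == r then 0 else F r v * (1 - p * In))
  else if v == r then F u r * (1 - p * Out) else F u v + p * F u r * F r v.

Let In_ge0 : 0 <= In. Proof. by apply: sumr_ge0 => u _; apply: F_ge0. Qed.
Let Out_ge0 : 0 <= Out. Proof. by apply: sumr_ge0 => u _; apply: F_ge0. Qed.
Let p_facts := inv_max_scale In_ge0 Out_ge0.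

Let G_ge0 : flow_ge0 G.
Proof.
have [p0 pIn pOut _] := p_facts.
move=> u v; rewrite /G; case: eqP => _; case: eqP => _ //.
- by rewrite mulr_ge0 // subr_ge0.
- by rewrite mulr_ge0 // subr_ge0.
- by rewrite addr_ge0 // !mulr_ge0.
Qed.

Let outflow_G u : u != r -> outflow G u = outflow F u.
Proof.
move=> ur; rewrite /outflow (bigD1 r) //= [in RHS](bigD1 r) //=.
rewrite /G eqxx (negbTE ur).
under eq_bigr => v vr do rewrite (negbTE vr).
rewrite big_split /= -mulr_sumr -/Out; ring.
Qed.

Let inflow_G v : v != r -> inflow G v = inflow F v.
Proof.
move=> vr; rewrite /inflow (bigD1 r) //= [in RHS](bigD1 r) //=.
rewrite /G eqxx (negbTE vr).
under eq_bigr => u ur do rewrite (negbTE ur).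
rewrite big_split /= -mulr_suml -mulr_sumr -/In; ring.
Qed.

Let outflow_G_at : outflow G r = Out * (1 - p * In).
Proof.
rewrite /outflow (bigD1 r) //= /G eqxx add0r mulr_suml.
by apply: eq_bigr => v vr; rewrite (negbTE vr).
Qed.

Let inflow_G_at : inflow G r = In * (1 - p * Out).
Proof.
rewrite /inflow (bigD1 r) //= /G eqxx add0r mulr_suml.
by apply: eq_bigr => v vr; rewrite (negbTE vr).
Qed.

Let excess_G u : outflow G u - inflow G u = outflow F u - inflow F u.
Proof.
have [->|ur] := eqVneq u r; last by rewrite outflow_G // inflow_G.
rewrite outflow_G_at inflow_G_at /outflow /inflow.
rewrite [\sum_v F r v](bigD1 r) // [\sum_v F v r](bigD1 r) //=.
rewrite -/In -/Out; ring.
Qed.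

Let transit_G : r \in transit F -> transit G \proper transit F.
Proof.
move=> r_transit.
have r_not_transit : ~~ ((0 < outflow G r) && (0 < inflow G r)).
  rewrite outflow_G_at inflow_G_at.
  by have [_ _ _ [->|->]] := p_facts; rewrite ltxx ?andbF.
apply/properP; split.
  apply/fintype.subsetP => u; rewrite !inE.
  have [->|ur] := eqVneq u r; last by rewrite outflow_G // inflow_G.
  by move=> /andP[/andP[_ out_gt0] in_gt0]; case/negP: r_not_transit; rewrite out_gt0.
by exists r => //; rewrite inE -andbA negb_and r_not_transit orbT.
Qed.

Let bypass_row_le u : r != D -> u != r ->
  ((F u r * (1 - p * Out))%:E * c u r +
     \sum_(v | v != r) (F u v + p * F u r * F r v)%:E * c u v <=
   ((F u r)%:E * c u r + \sum_(v | v != r) (F u v)%:E * c u v) +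
     \sum_(v | v != r) (p * F r v * F u r)%:E * c r v)%E.
Proof.
move=> rD ur; have [p0 _ pOut _] := p_facts.
have shortcut : (\sum_(v | v != r) (F u v + p * F u r * F r v)%:E * c u v <=
    \sum_(v | v != r) (((F u v)%:E * c u v + (p * F u r * F r v)%:E * c u r)
      + (p * F r v * F u r)%:E * c r v))%E.
  apply: lee_sum => v vr; rewrite EFinD ge0_muleDl ?lee_fin ?mulr_ge0 // -addeA.
  apply: leeD => //; rewrite [p * F r v * F u r]mulrAC [p * F u r * F r v]mulrAC.
  rewrite -ge0_muleDr ?c_ge0 //; apply: lee_wpmul2l; last exact: c_triangle.
  by rewrite lee_fin !mulr_ge0 ?F_ge0.
apply: le_trans (leeD (lexx _) shortcut) _.
rewrite !big_split /= ge0_sumEFinM_distrl ?mulr_ge0 ?F_ge0 // -/Out addeA; apply: leeD => //.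
rewrite [X in (_ + X <= _)%E]addeC addeA; apply: leeD => //.
rewrite -ge0_muleDl ?lee_fin ?mulr_ge0 ?subr_ge0 ?F_ge0 // -EFinD.
by have -> : F u r * (1 - p * Out) + p * F u r * Out = F u r by ring.
Qed.

Let flow_cost_G : r != D -> (flow_cost c G <= flow_cost c F)%E.
Proof.
move=> rD; have [p0 pIn _ _] := p_facts.
have -> : flow_cost c G = (\sum_(v | v != r) (F r v * (1 - p * In))%:E * c r v +
    \sum_(u | u != r) ((F u r * (1 - p * Out))%:E * c u r +
      \sum_(v | v != r) (F u v + p * F u r * F r v)%:E * c u v))%E.
  rewrite (flow_cost_split_at _ r) /G eqxx mul0e add0e; congr (_ + _)%E.
    by apply: eq_bigr => v vr; rewrite (negbTE vr).
  apply: eq_bigr => u ur; rewrite (negbTE ur); congr (_ + _)%E.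
  by apply: eq_bigr => v vr; rewrite (negbTE vr).
have F_split : (\sum_(v | v != r) (F r v)%:E * c r v +
    \sum_(u | u != r) ((F u r)%:E * c u r + \sum_(v | v != r) (F u v)%:E * c u v) <=
    flow_cost c F)%E.
  by rewrite (flow_cost_split_at _ r F) -addeA; apply: leeDr; rewrite mule_ge0 ?lee_fin.
apply: le_trans F_split.
have rows := lee_sum (index_enum N) (fun u => @bypass_row_le u rD).
have rerouted : (\sum_(u | u != r) \sum_(v | v != r) (p * F r v * F u r)%:E * c r v =
    \sum_(v | v != r) (p * F r v * In)%:E * c r v)%E.
  by rewrite exchange_big; apply: eq_bigr => v _; rewrite ge0_sumEFinM_distrl ?mulr_ge0.
rewrite [X in (_ <= X)%E]big_split /= rerouted in rows.
apply: le_trans (leeD (lexx _) rows) _.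
rewrite [X in (_ + X <= _)%E]addeC addeA; apply: leeD => //.
rewrite -big_split /=; apply: lee_sum => v _.
rewrite -ge0_muleDl ?lee_fin ?mulr_ge0 ?subr_ge0 // -EFinD.
by have -> : F r v * (1 - p * In) + p * F r v * In = F r v by ring.
Qed.

Lemma bypass_transit : r \in transit F -> exists G, [/\ flow_ge0 G,
  forall u, outflow G u - inflow G u = outflow F u - inflow F u,
  (flow_cost c G <= flow_cost c F)%E & transit G \proper transit F].
Proof.
move=> r_transit; exists G; split; [exact: G_ge0|exact: excess_G| |exact: transit_G].
by apply: flow_cost_G; move: r_transit; rewrite inE => /andP[/andP[]].
Qed.

End Bypass.

Lemma transit0_source_or_sink F : flow_ge0 F -> #|transit F| = 0%N ->
  forall u, u != D -> outflow F u = 0 \/ inflow F u = 0.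
Proof.
move=> F_ge0 no_transit u uD.
have out_ge0 : 0 <= outflow F u by apply: sumr_ge0.
have in_ge0 : 0 <= inflow F u by apply: sumr_ge0.
have : u \notin transit F by move/card0_eq: no_transit => ->.
rewrite inE uD /= negb_and !lt_def out_ge0 in_ge0 !andbT !negbK.
by case/orP => /eqP ->; [left|right].
Qed.

Lemma transit_free_flow F : flow_ge0 F -> exists G, [/\ flow_ge0 G,
  forall u, outflow G u - inflow G u = outflow F u - inflow F u,
  (flow_cost c G <= flow_cost c F)%E &
  forall u, u != D -> outflow G u = 0 \/ inflow G u = 0].
Proof.
move: {2}#|transit F| (leqnn #|transit F|) => n.
elim: n F => [|n IH] F F_size F_ge0.
  exists F; split => //; apply: transit0_source_or_sink => //.
  by apply/eqP; rewrite -leqn0.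
have [no_transit|/card_gt0P[r r_transit]] := posnP #|transit F|.
  by exists F; split => //; apply: transit0_source_or_sink.
have [G [G_ge0 G_excess G_cost G_transit]] := bypass_transit F_ge0 r_transit.
have G_size : (#|transit G| <= n)%N by rewrite -ltnS (leq_trans (proper_card G_transit)).
have [H [H_ge0 H_excess H_cost H_free]] := IH G G_size G_ge0.
exists H; split => //; first by move=> u; rewrite H_excess G_excess.
exact: le_trans H_cost G_cost.
Qed.

End FlowReduction.

Section Distances.
Variable R : realType.
Implicit Types x y z : pt R.

Lemma dist1_ge0 x y : (0 <= dist1 x y)%E.
Proof.
case: x => x1 [a| |]; case: y => y1 [b| |]; rewrite /dist1 /= ?leey //.
  by rewrite -EFinD lee_fin addr_ge0.
by rewrite adde0 lee_fin.
Qed.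

Lemma delta_ge0 x : (0 <= delta x)%E.
Proof. exact: abse_ge0. Qed.

Lemma dist1C x y : dist1 x y = dist1 y x.
Proof.
case: x => x1 [a| |]; case: y => y1 [b| |];
  by rewrite /dist1 /= (distrC x1 y1) // (distrC a b).
Qed.

Lemma dist1_triangle x y z : (dist1 x z <= dist1 x y + dist1 y z)%E.
Proof.
case: x => x1 [a| |]; case: y => y1 [b| |]; case: z => z1 [e| |];
  rewrite /dist1 /= ?leey ?addey ?addye //.
- rewrite -!EFinD lee_fin.
  have := ler_distD y1 x1 z1; have := ler_distD b a e; lra.
- by rewrite !adde0 -EFinD lee_fin ler_distD.
Qed.

Lemma delta_le_delta_dist1 x y : (delta y <= delta x + dist1 x y)%E.
Proof.
case: x => x1 [a| |]; case: y => y1 [b| |]; rewrite /delta /dist1 /= ?leey ?addey ?addye //.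
rewrite -!EFinD lee_fin.
have := ler_distD a b y1; have := ler_distD x1 a y1.
rewrite (distrC b a); lra.
Qed.

Lemma delta_le_dist1_delta x y : (delta x <= dist1 x y + delta y)%E.
Proof. by rewrite addeC dist1C; apply: delta_le_delta_dist1. Qed.

Lemma dist1xx x : x.2 != -oo%E -> dist1 x x = 0%E.
Proof. by case: x => x1 [a| |] //= _; rewrite /dist1 /= !subrr normr0 ?adde0. Qed.

Lemma dist1_gt0 x y : x != y -> (0 < dist1 x y)%E.
Proof.
case: x => x1 [a| |]; case: y => y1 [b| |] => xy; rewrite /dist1 /= ?ltey //.
- rewrite -EFinD lte_fin.
  have [x1y1|x1y1] := eqVneq x1 y1; last by rewrite ltr_pwDl // normr_gt0 subr_eq0.
  rewrite x1y1 subrr normr0 add0r normr_gt0 subr_eq0.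
  by apply: contraNneq xy => ->; rewrite x1y1.
- by rewrite adde0 lte_fin normr_gt0 subr_eq0; apply: contraNneq xy => ->.
Qed.

Lemma delta_gt0 x : x.2 != x.1%:E -> (0 < delta x)%E.
Proof.
case: x => x1 [a| |] //= x_off; rewrite /delta /= ?ltey // lte_fin normr_gt0 subr_eq0.
by apply: contraNneq x_off => ->.
Qed.

End Distances.

Definition supported_in (R : realType) (s : {fset pt R}) (f : pt R -> R) :=
  forall x, f x != 0 -> x \in s.

Lemma in_supp (R : realType) (f : pt R -> R) x : (x \in supp f) = (f x != 0).
Proof. by apply/idP/idP => [/set_mem //|]; apply/mem_set. Qed.

Section AugmentedGraph.
Variables (R : realType) (s : {fset pt R}).
Local Notation node := (option s).

(* The extra node [None] stands for the diagonal. *)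
Definition edge_cost (u v : node) : \bar R :=
  match u, v with
  | Some x, Some y => dist1 (val x) (val y)
  | Some x, None | None, Some x => delta (val x)
  | None, None => 0%E
  end.

Lemma edge_cost_ge0 u v : (0 <= edge_cost u v)%E.
Proof. by case: u => [x|]; case: v => [y|] //=; rewrite ?dist1_ge0 ?delta_ge0. Qed.

Lemma edge_costC u v : edge_cost u v = edge_cost v u.
Proof. by case: u => [x|]; case: v => [y|] //=; rewrite dist1C. Qed.

Lemma edge_cost_triangle u v r : r != None ->
  (edge_cost u v <= edge_cost u r + edge_cost r v)%E.
Proof.
case: r => // r _; case: u => [x|]; case: v => [y|] /=.
- exact: dist1_triangle.
- exact: delta_le_dist1_delta.
- exact: delta_le_delta_dist1.
- by rewrite adde_ge0 // delta_ge0.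
Qed.

Lemma fsbig_fset (V : Type) (idx : V) (op : Monoid.com_law idx) (A : set (pt R))
    (f : pt R -> V) : (forall x, A x -> x \in s) ->
  \big[op/idx]_(x \in A) f x = \big[op/idx]_(x : s) (if val x \in A then f (val x) else idx).
Proof.
move=> As; rewrite fsbig_mkcond (fsbigTE s); last first.
  move=> x x_notin_s; rewrite /patch; case: ifP => // /set_mem /As.
  by rewrite (negbTE x_notin_s).
by rewrite big_seq_fsetE.
Qed.

Lemma flow_costE (H : node -> node -> R) : flow_cost edge_cost H =
  (\sum_(x : s) \sum_(y : s) (H (Some x) (Some y))%:E * dist1 (val x) (val y) +
   \sum_(x : s) (H (Some x) None)%:E * delta (val x) +
   \sum_(y : s) (H None (Some y))%:E * delta (val y))%E.
Proof.
rewrite /flow_cost big_option /= big_option /= mule0 add0e.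
under [X in (_ + X)%E]eq_bigr => x _ do rewrite big_option /=.
by rewrite big_split /= addeC [X in (X + _)%E]addeC.
Qed.

Lemma costE (A B : pt R -> R) T X Y :
  supported_in s A -> supported_in s B -> cost A B T X Y =
  (\sum_(x : s) (if val x \in supp A then
      \sum_(y : s) (if val y \in supp B then (T (val x) (val y))%:E * dist1 (val x) (val y)
                    else 0) else 0) +
   \sum_(x : s) (if val x \in supp A then (X (val x))%:E * delta (val x) else 0) +
   \sum_(y : s) (if val y \in supp B then (Y (val y))%:E * delta (val y) else 0))%E.
Proof.
move=> As Bs; rewrite /cost !(@fsbig_fset _ _ _ (supp A) _ As).
rewrite (@fsbig_fset _ _ _ (supp B) _ Bs).
congr (_ + _ + _)%E; apply: eq_bigr => x _; case: ifP => // _.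
by rewrite (@fsbig_fset _ _ _ (supp B) _ Bs).
Qed.

Definition flow_of_plan (A B : pt R -> R) (T : pt R -> pt R -> R) (X Y : pt R -> R)
    (u v : node) : R :=
  match u, v with
  | Some x, Some y => if (val x \in supp A) && (val y \in supp B) then T (val x) (val y) else 0
  | Some x, None => if val x \in supp A then X (val x) else 0
  | None, Some y => if val y \in supp B then Y (val y) else 0
  | None, None => 0
  end.

Section FlowOfPlan.
Variables (A B : pt R -> R) (T : pt R -> pt R -> R) (X Y : pt R -> R).
Hypotheses (As : supported_in s A) (Bs : supported_in s B) (TXY : feasible A B T X Y).
Local Notation F := (flow_of_plan A B T X Y).

Lemma flow_of_plan_ge0 : flow_ge0 F.
Proof.
have [T_ge0 [X_ge0 [Y_ge0 _]]] := TXY.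
case=> [x|] [y|] //=; case: ifP => //.
- by move=> /andP[]; apply: T_ge0.
- exact: X_ge0.
- exact: Y_ge0.
Qed.

Lemma outflow_flow_of_plan x : outflow F (Some x) = A (val x).
Proof.
have [_ [_ [_ [A_marginal _]]]] := TXY.
rewrite /outflow big_option /=; case: ifP => [x_supp|].
  by rewrite -(@fsbig_fset _ _ _ (supp B) (T (val x)) Bs) A_marginal.
move/negbT; rewrite in_supp negbK => /eqP ->.
by rewrite add0r big1.
Qed.

Lemma inflow_flow_of_plan y : inflow F (Some y) = B (val y).
Proof.
have [_ [_ [_ [_ B_marginal]]]] := TXY.
rewrite /inflow big_option /=; case: ifP => [y_supp|].
  under eq_bigr => x _ do rewrite andbT.
  by rewrite -(@fsbig_fset _ _ _ (supp A) (T^~ (val y)) As) B_marginal.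
move/negbT; rewrite in_supp negbK => /eqP ->.
by rewrite add0r big1 // => x _; rewrite andbF.
Qed.

Lemma flow_cost_flow_of_plan : flow_cost edge_cost F = cost A B T X Y.
Proof.
rewrite flow_costE costE //; congr (_ + _ + _)%E; apply: eq_bigr => x _ /=;
  case: ifP => _; rewrite ?mul0e //.
- by apply: eq_bigr => y _ /=; case: ifP => _; rewrite ?mul0e.
- by rewrite big1 // => y _; rewrite mul0e.
Qed.

End FlowOfPlan.

Section PlanOfFlow.
Variables (A B : pt R -> R) (G : node -> node -> R).
Hypotheses (As : supported_in s A) (Bs : supported_in s B).
Hypotheses (A_ge0 : forall x, 0 <= A x) (B_ge0 : forall x, 0 <= B x) (G_ge0 : flow_ge0 G).
Hypothesis G_excess :
  forall x : s, outflow G (Some x) - inflow G (Some x) = A (val x) - B (val x).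
Hypothesis G_source_or_sink :
  forall x : s, outflow G (Some x) = 0 \/ inflow G (Some x) = 0.

Local Notation m x := (Num.min (A x) (B x)).

(* The mass [m x] that [G] leaves in place at [x] is transported to [x] itself. *)
Definition plan_of_flow_T x y := if x == y then m x else G (insub x) (insub y).
Definition plan_of_flow_X x := G (insub x) None.
Definition plan_of_flow_Y y := G None (insub y).

Let outflow_ge0 u : 0 <= outflow G u. Proof. by apply: sumr_ge0. Qed.
Let inflow_ge0 u : 0 <= inflow G u. Proof. by apply: sumr_ge0. Qed.

Let G_le_outflow u v : G u v <= outflow G u.
Proof. by rewrite /outflow (bigD1 v) //= lerDl sumr_ge0. Qed.

Let G_le_inflow u v : G u v <= inflow G v.
Proof. by rewrite /inflow (bigD1 u) //= lerDl sumr_ge0. Qed.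

Let balance x :
  outflow G (Some x) + m (val x) = A (val x) /\ inflow G (Some x) + m (val x) = B (val x).
Proof.
have := G_excess x; have := outflow_ge0 (Some x); have := inflow_ge0 (Some x).
have [->|->] := G_source_or_sink x => ? ? excess.
- by rewrite (min_idPl _); lra.
- by rewrite (min_idPr _); lra.
Qed.

Let G_loop x : G (Some x) (Some x) = 0.
Proof.
apply/le_anti; rewrite G_ge0 andbT.
by have [<-|<-] := G_source_or_sink x; [apply: G_le_outflow|apply: G_le_inflow].
Qed.

Let G_out_of_suppA x v : val x \notin supp A -> G (Some x) v = 0.
Proof.
rewrite in_supp negbK => /eqP Ax0; have [out_bal _] := balance x.
rewrite Ax0 (min_idPl (B_ge0 _)) addr0 in out_bal.
by apply/le_anti; rewrite G_ge0 andbT -out_bal.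
Qed.

Let G_into_suppB u y : val y \notin supp B -> G u (Some y) = 0.
Proof.
rewrite in_supp negbK => /eqP By0; have [_ in_bal] := balance y.
rewrite By0 (min_idPr (A_ge0 _)) addr0 in in_bal.
by apply/le_anti; rewrite G_ge0 andbT -in_bal.
Qed.

Let plan_of_flow_TE (x y : s) : plan_of_flow_T (val x) (val y) =
  if x == y then m (val x) else G (Some x) (Some y).
Proof. by rewrite /plan_of_flow_T val_eqE !valK. Qed.

Let plan_row_sum (x : s) :
  \sum_(y : s) (if val y \in supp B then plan_of_flow_T (val x) (val y) else 0) =
  \sum_(y : s) G (Some x) (Some y) + m (val x).
Proof.
transitivity (\sum_(y : s) (G (Some x) (Some y) + (if y == x then m (val x) else 0))).
  apply: eq_bigr => y _; rewrite plan_of_flow_TE eq_sym.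
  have [->|xy] := eqVneq y x; rewrite ?G_loop ?add0r ?addr0; case: ifP => //.
    by move/negbT; rewrite in_supp negbK => /eqP ->; rewrite (min_idPr (A_ge0 _)).
  by move/negbT/G_into_suppB ->.
by rewrite big_split /= -big_mkcond big_pred1_eq.
Qed.

Let plan_col_sum (y : s) :
  \sum_(x : s) (if val x \in supp A then plan_of_flow_T (val x) (val y) else 0) =
  \sum_(x : s) G (Some x) (Some y) + m (val y).
Proof.
transitivity (\sum_(x : s) (G (Some x) (Some y) + (if x == y then m (val y) else 0))).
  apply: eq_bigr => x _; rewrite plan_of_flow_TE.
  have [->|xy] := eqVneq x y; rewrite ?G_loop ?add0r ?addr0; case: ifP => //.
    by move/negbT; rewrite in_supp negbK => /eqP ->; rewrite (min_idPl (B_ge0 _)).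
  by move/negbT/G_out_of_suppA ->.
by rewrite big_split /= -big_mkcond big_pred1_eq.
Qed.

Lemma plan_of_flow_feasible :
  feasible A B plan_of_flow_T plan_of_flow_X plan_of_flow_Y.
Proof.
split; [|split; [|split; [|split]]].
- by move=> x y _ _; rewrite /plan_of_flow_T; case: ifP => _; rewrite ?le_min ?A_ge0 ?B_ge0.
- by move=> x _; apply: G_ge0.
- by move=> y _; apply: G_ge0.
- move=> x /set_mem /As xs; have -> : x = val [` xs]%fset by [].
  rewrite (@fsbig_fset _ _ _ (supp B) _ Bs) plan_row_sum /plan_of_flow_X valK.
  have [out_bal _] := balance [` xs]%fset.
  by rewrite -[X in _ = X]out_bal addrA /outflow big_option.
- move=> y /set_mem /Bs ys; have -> : y = val [` ys]%fset by [].
  rewrite (@fsbig_fset _ _ _ (supp A) (plan_of_flow_T^~ _) As) plan_col_sum.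
  rewrite /plan_of_flow_Y valK; have [_ in_bal] := balance [` ys]%fset.
  by rewrite -[X in _ = X]in_bal addrA /inflow big_option.
Qed.

Hypothesis s_fin : forall x, x \in s -> x.2 != -oo%E.

Lemma cost_plan_of_flow_le :
  (cost A B plan_of_flow_T plan_of_flow_X plan_of_flow_Y <= flow_cost edge_cost G)%E.
Proof.
have G_cost_ge0 u v : (0 <= (G u v)%:E * edge_cost u v)%E.
  by rewrite mule_ge0 ?lee_fin ?edge_cost_ge0.
rewrite costE // flow_costE; apply: leeD; [apply: leeD|].
- apply: lee_sum => x _; case: ifP => _; last first.
    by apply: sume_ge0 => y _; apply: (G_cost_ge0 (Some x) (Some y)).
  apply: lee_sum => y _; case: ifP => _; last exact: (G_cost_ge0 (Some x) (Some y)).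
  rewrite plan_of_flow_TE; case: eqVneq => [<-|_] //.
  by rewrite dist1xx ?mule0 ?(G_cost_ge0 (Some x) (Some x)) // s_fin // fsvalP.
- apply: lee_sum => x _; case: ifP => _; last exact: (G_cost_ge0 (Some x) None).
  by rewrite /plan_of_flow_X valK.
- apply: lee_sum => y _; case: ifP => _; last exact: (G_cost_ge0 None (Some y)).
  by rewrite /plan_of_flow_Y valK.
Qed.

End PlanOfFlow.

Lemma W1_le_flow_cost (A B : pt R -> R) (F : node -> node -> R) :
  (forall x, x \in s -> x.2 != -oo%E) ->
  supported_in s A -> supported_in s B -> (forall x, 0 <= A x) -> (forall x, 0 <= B x) ->
  flow_ge0 F ->
  (forall x : s, outflow F (Some x) - inflow F (Some x) = A (val x) - B (val x)) ->
  (W1 A B <= flow_cost edge_cost F)%E.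
Proof.
move=> s_fin As Bs A_ge0 B_ge0 F_ge0 F_excess.
have [G [G_ge0 G_excess G_cost G_free]] :=
  transit_free_flow edge_cost_ge0 edge_cost_triangle F_ge0.
have G_excess' x : outflow G (Some x) - inflow G (Some x) = A (val x) - B (val x).
  by rewrite G_excess F_excess.
have G_free' x : outflow G (Some x) = 0 \/ inflow G (Some x) = 0 by apply: G_free.
apply: le_trans G_cost.
apply: le_trans (cost_plan_of_flow_le As Bs G_ge0 s_fin).
apply: ereal_inf_lbound; exists (plan_of_flow_T A B G), (plan_of_flow_X G), (plan_of_flow_Y G).
by split=> //; apply: plan_of_flow_feasible.
Qed.

Lemma min_exit_cost_gt0 (x : s) : (val x).2 != (val x).1%:E ->
  (0 < min_exit_cost edge_cost (Some x))%E.
Proof.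
move=> x_off; apply/bigmin_gtP; split => // -[y|] yx /=; last exact: delta_gt0.
by apply: dist1_gt0; apply: contraNneq yx => /val_inj ->.
Qed.

End AugmentedGraph.
Arguments edge_cost {R s}.

Lemma cost_ge0 (R : realType) (A B : pt R -> R) T X Y :
  feasible A B T X Y -> (0 <= cost A B T X Y)%E.
Proof.
move=> [T_ge0 [X_ge0 [Y_ge0 _]]]; apply: adde_ge0; [apply: adde_ge0|].
- apply: fsume_ge0 => x /mem_set x_supp; apply: fsume_ge0 => y /mem_set y_supp.
  by rewrite mule_ge0 ?dist1_ge0 // lee_fin T_ge0.
- by apply: fsume_ge0 => x /mem_set x_supp; rewrite mule_ge0 ?delta_ge0 // lee_fin X_ge0.
- by apply: fsume_ge0 => y /mem_set y_supp; rewrite mule_ge0 ?delta_ge0 // lee_fin Y_ge0.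
Qed.

Lemma W1_ge0 (R : realType) (A B : pt R -> R) : (0 <= W1 A B)%E.
Proof. by apply: le_ereal_inf_tmp => _ [T [X [Y [TXY ->]]]]; apply: cost_ge0. Qed.

Lemma lb_ereal_infD (R : realType) (S1 S2 : set (\bar R)) (w : \bar R) :
  (forall c, S1 c -> (0 <= c)%E) -> (forall c, S2 c -> (0 <= c)%E) ->
  (forall c1 c2, S1 c1 -> S2 c2 -> (w <= c1 + c2)%E) ->
  (w <= ereal_inf S1 + ereal_inf S2)%E.
Proof.
move=> S1_ge0 S2_ge0 w_lb.
have inf1_ge0 : (0 <= ereal_inf S1)%E by apply: le_ereal_inf_tmp.
have inf2_ge0 : (0 <= ereal_inf S2)%E by apply: le_ereal_inf_tmp.
have lb1 c1 : S1 c1 -> (w <= c1 + ereal_inf S2)%E.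
  move=> S1c1; have := S1_ge0 _ S1c1; case: c1 S1c1 => [r| |] S1r // r_ge0.
    rewrite -leeBlDl //; apply: le_ereal_inf_tmp => c2 S2c2.
    by rewrite leeBlDl //; apply: w_lb.
  by rewrite addye ?leey // gt_eqF // (lt_le_trans _ inf2_ge0) // ltNye.
case inf2E : (ereal_inf S2) => [r| |].
- rewrite -leeBlDr //; apply: le_ereal_inf_tmp => c1 S1c1.
  by rewrite leeBlDr // -inf2E; apply: lb1.
- by rewrite addey ?leey // gt_eqF // (lt_le_trans _ inf1_ge0) // ltNye.
- by rewrite inf2E in inf2_ge0.
Qed.

Lemma posp_sub_negp (R : realType) (f : pt R -> R) x : posp f x - negp f x = f x.
Proof.
rewrite /posp /negp !maxEle oppr_le0; have [f_le0|f_gt0] := leP (f x) 0.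
  by rewrite sub0r; case: leP => f_cmp; lra.
by rewrite (ltW f_gt0) subr0.
Qed.

Section AlternatingDistance.
Variables (R : realType) (s : {fset pt R}).
Hypothesis s_fin : forall x, x \in s -> x.2 != -oo%E.
Local Notation node := (option s).
Implicit Types f g h : pt R -> R.

Definition balanced_flow f g (F : node -> node -> R) :=
  flow_ge0 F /\ forall x : s, outflow F (Some x) - inflow F (Some x) = f (val x) - g (val x).

Lemma supported_in_pm f g : supported_in s f -> supported_in s g ->
  supported_in s (fun x => posp f x + negp g x) /\
  supported_in s (fun x => negp f x + posp g x).
Proof.
move=> fs gs; split=> x; apply: contraNT => x_notin_s;
  have /eqP f0 : f x == 0 by apply: contraNT x_notin_s => /fs ->.
all: have /eqP g0 : g x == 0 by apply: contraNT x_notin_s => /gs ->.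
all: by rewrite /posp /negp f0 g0 oppr0 maxxx addr0.
Qed.

Lemma W1pm_flowE f g : supported_in s f -> supported_in s g ->
  W1pm f g = ereal_inf [set flow_cost edge_cost F | F in balanced_flow f g].
Proof.
move=> fs gs; have [As Bs] := supported_in_pm fs gs.
have pm_excess x : posp f x + negp g x - (negp f x + posp g x) = f x - g x.
  by have := posp_sub_negp f x; have := posp_sub_negp g x; lra.
apply/le_anti/andP; split.
- apply: le_ereal_inf_tmp => _ [F [F_ge0 F_excess] <-].
  apply: W1_le_flow_cost => // x; rewrite ?F_excess ?pm_excess //.
  1,2: by apply: addr_ge0; rewrite le_max lexx orbT.
- apply: le_ereal_inf_tmp => _ [T [X [Y [TXY ->]]]].
  rewrite -(flow_cost_flow_of_plan (s := s)) //; apply: ereal_inf_lbound.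
  pose A x := posp f x + negp g x; pose B x := negp f x + posp g x.
  exists (flow_of_plan A B T X Y) => //.
  split; first exact: flow_of_plan_ge0.
  by move=> x; rewrite outflow_flow_of_plan // inflow_flow_of_plan // pm_excess.
Qed.

Lemma balanced_flow_tr f g F : balanced_flow f g F -> balanced_flow g f (fun u v => F v u).
Proof.
move=> [F_ge0 F_excess]; split=> [u v|x]; first exact: F_ge0.
by have := F_excess x; rewrite /outflow /inflow; lra.
Qed.

Lemma balanced_flowD f g h F1 F2 : balanced_flow f g F1 -> balanced_flow g h F2 ->
  balanced_flow f h (fun u v => F1 u v + F2 u v).
Proof.
move=> [F1_ge0 F1_excess] [F2_ge0 F2_excess]; split=> [u v|x]; first exact: addr_ge0.
have := F1_excess x; have := F2_excess x; rewrite /outflow /inflow !big_split /=; lra.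
Qed.

Lemma W1pmC f g : supported_in s f -> supported_in s g -> W1pm f g = W1pm g f.
Proof.
suff W1pm_le f' g' : supported_in s f' -> supported_in s g' -> (W1pm g' f' <= W1pm f' g')%E.
  by move=> fs gs; apply/le_anti; rewrite !W1pm_le.
move=> fs gs; rewrite !W1pm_flowE //; apply: le_ereal_inf_tmp => _ [F F_bal <-].
rewrite -(flow_cost_tr (@edge_costC _ s)); apply: ereal_inf_lbound.
by exists (fun u v => F v u) => //; apply: balanced_flow_tr.
Qed.

Lemma W1pm_self f : supported_in s f -> W1pm f f = 0%E.
Proof.
move=> fs; apply/le_anti; rewrite W1_ge0 andbT W1pm_flowE //.
apply: ereal_inf_lbound; exists (fun _ _ => 0).
  by split=> [//|x]; rewrite /outflow /inflow !big1_eq !subrr.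
by rewrite /flow_cost big1 // => u _; rewrite big1 // => v _; rewrite mul0e.
Qed.

Lemma W1pm_triangle f g h : supported_in s f -> supported_in s g -> supported_in s h ->
  (W1pm f h <= W1pm f g + W1pm g h)%E.
Proof.
move=> fs gs hs; rewrite !W1pm_flowE //.
have costs_ge0 f' g' c :
    [set flow_cost edge_cost F | F in balanced_flow f' g']%classic c -> (0 <= c)%E.
  by move=> [F [F_ge0 _] <-]; apply: flow_cost_ge0 => //; apply: edge_cost_ge0.
apply: lb_ereal_infD; [exact: costs_ge0|exact: costs_ge0|].
move=> _ _ [F1 F1_bal <-] [F2 F2_bal <-].
rewrite -flow_costD; [|exact: F1_bal.1|exact: F2_bal.1].
apply: ereal_inf_lbound; exists (fun u v => F1 u v + F2 u v) => //.
exact: balanced_flowD F2_bal.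
Qed.

Lemma W1pm_gt0 f g p : supported_in s f -> supported_in s g ->
  p \in s -> p.2 != p.1%:E -> f p != g p -> (0 < W1pm f g)%E.
Proof.
move=> fs gs ps p_off fgp; pose q : s := [` ps]%fset.
rewrite W1pm_flowE //.
apply: (@lt_le_trans _ _ (`|f p - g p|%:E * min_exit_cost edge_cost (Some q))%E).
  by rewrite mule_gt0 ?lte_fin ?normr_gt0 ?subr_eq0 ?min_exit_cost_gt0.
apply: le_ereal_inf_tmp => _ [F [F_ge0 F_excess] <-].
rewrite -[p]/(val q) -F_excess.
by apply: flow_cost_abs_excess_lb F_ge0; [apply: edge_cost_ge0|apply: edge_costC].
Qed.

End AlternatingDistance.

Local Open Scope ereal_scope.

Theorem mainTheorem12 (R : realType) (xi eta zeta : pt R -> R) :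
  admissible xi -> admissible eta -> admissible zeta ->
  [/\ 0 <= W1pm xi eta,
      (0 < W1pm xi eta <-> xi <> eta),
      W1pm xi eta = W1pm eta xi &
      W1pm xi zeta <= W1pm xi eta + W1pm eta zeta].
Proof.
move=> [xi_fin xi_off] [eta_fin eta_off] [zeta_fin zeta_off].
have [s in_s] : exists s : {fset pt R},
    forall x, (x \in s) = [|| xi x != 0, eta x != 0 | zeta x != 0]%R.
  exists (fset_set (supp xi `|` supp eta `|` supp zeta)%classic) => x.
  by rewrite in_fset_set ?finite_setU ?xi_fin ?eta_fin ?zeta_fin // !in_setU !in_supp orbA.
have s_fin x : x \in s -> x.2 != -oo.
  by rewrite in_s => /or3P[/xi_off|/eta_off|/zeta_off] [].
have [xi_s eta_s zeta_s] :
    [/\ supported_in s xi, supported_in s eta & supported_in s zeta].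
  by split=> x x_supp; rewrite in_s x_supp ?orbT.
split; [exact: W1_ge0|split|exact: (W1pmC s_fin)|exact: (W1pm_triangle s_fin)].
  by move=> W1pm_pos xi_eta; move: W1pm_pos; rewrite xi_eta (W1pm_self s_fin eta_s) ltxx.
move=> xi_neq_eta; have /existsNP[p /eqP xi_eta_p] : ~ forall p, xi p = eta p.
  by move/funext.
have [p_s p_off] : p \in s /\ p.2 != p.1%:E.
  have [xi_p0|xi_p_neq0] := eqVneq (xi p) 0%R; last by rewrite in_s xi_p_neq0 (xi_off p _).2.
  have eta_p_neq0 : (eta p != 0)%R by rewrite -xi_p0 eq_sym.
  by rewrite in_s eta_p_neq0 orbT (eta_off p _).2.
exact: (W1pm_gt0 s_fin xi_s eta_s p_s).
Qed.
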